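(* Let $n\ge2$, $a\in\{-1,0,1\}$, $b,d\in\{1,-1\}$, $C,H\in\mathbb{R}$, and $f(v)=C-dv^2\big(a+b(H+v^{-n})^2\big)$ for $v>0$. Let $g:\mathbb{R}\to(0,\infty)$ be a non-constant smooth function with $(g')^2=f(g)$ and $g''=\tfrac12 f'(g)$ on $\mathbb{R}$. Then $g$ is of one of the types 1–5 defined in the context.
   Context: Types of a non-constant positive solution $g:\mathbb{R}\to(0,\infty)$: type 1 (periodic): $g$ is periodic with range $[v_1,v_2]$, $0<v_1<v_2$, and its maximum and minimum are each attained infinitely many times; type 2 (unbounded with no minimum): $g$ is injective with range $(v_1,\infty)$ for some $v_1>0$; type 3 (unbounded with a minimum): range $[v_1,\infty)$, $v_1$ attained exactly once and every other value of the range attained exactly twice; type 4 (bounded, not periodic, with a minimum): range $[v_1,v_2)$, $v_1$ attained exactly once, every other value exactly twice; type 5 (bounded, not periodic, with a maximum): range $(v_1,v_2]$, $v_2$ attained exactly once, every other value exactly twice. *)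

From Stdlib Require Import Reals Lra List.
From Coquelicot Require Import Coquelicot.
Open Scope R_scope.

Definition fpot (n : nat) (a b d C H : R) (v : R) : R :=
  C - d * v ^ 2 * (a + b * (H + / v ^ n) ^ 2).

Definition smooth (g : R -> R) : Prop :=
  forall (k : nat) (x : R), ex_derive_n g k x.

Definition periodic (g : R -> R) : Prop :=
  exists T : R, 0 < T /\ forall x, g (x + T) = g x.

Definition attained_infinitely (g : R -> R) (y : R) : Prop :=
  ~ (exists l : list R, forall x, g x = y -> In x l).

Definition attained_once (g : R -> R) (y : R) : Prop :=
  exists x, g x = y /\ forall x', g x' = y -> x' = x.

Definition attained_twice (g : R -> R) (y : R) : Prop :=
  exists x1 x2, x1 <> x2 /\ g x1 = y /\ g x2 = y /\
    forall x, g x = y -> x = x1 \/ x = x2.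

Definition in_range (g : R -> R) (y : R) : Prop := exists x, g x = y.

Definition type1 (g : R -> R) : Prop :=
  periodic g /\ exists v1 v2, 0 < v1 < v2 /\
    (forall y, in_range g y <-> v1 <= y <= v2) /\
    attained_infinitely g v1 /\ attained_infinitely g v2.

Definition type2 (g : R -> R) : Prop :=
  (forall x y, g x = g y -> x = y) /\
  exists v1, 0 < v1 /\ (forall y, in_range g y <-> v1 < y).

Definition type3 (g : R -> R) : Prop :=
  exists v1, (forall y, in_range g y <-> v1 <= y) /\
    attained_once g v1 /\ (forall y, v1 < y -> attained_twice g y).

Definition type4 (g : R -> R) : Prop :=
  ~ periodic g /\ exists v1 v2,
    (forall y, in_range g y <-> v1 <= y < v2) /\
    attained_once g v1 /\ (forall y, v1 < y < v2 -> attained_twice g y).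

Definition type5 (g : R -> R) : Prop :=
  ~ periodic g /\ exists v1 v2,
    (forall y, in_range g y <-> v1 < y <= v2) /\
    attained_once g v2 /\ (forall y, v1 < y < v2 -> attained_twice g y).

From Stdlib Require Import Reals Lra Lia List Classical.
From Coquelicot Require Import Coquelicot.
Open Scope R_scope.

(* The equation [g'' = f'(g)/2] is autonomous and its right-hand side is locally Lipschitz on
   [(0, +oo)], so solutions are unique and [x |-> g (2 x0 - x)] is again a solution; hence [g]
   is symmetric about each of its critical points.  Two critical points make [g] periodic
   (type 1).  With exactly one critical point [x0], [g'] has a constant sign on [(x0, +oo)], so
   [g] is a valley or a hill about [x0] (types 3, 4, 5).  Without critical points [g] is strictly
   monotone.  By the first integral [g'^2 = f(g)] each finite end of its range is a common zero
   of [f] and [f'], and since [f'(v) = -2 d v Q(v^-n)] with [Q] a nondegenerate quadratic, [f']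
   has at most two positive zeros, so Rolle's theorem forbids a range bounded on both sides; the
   sign of [f] near [0] keeps the range away from [0] (type 2). *)

Lemma mean_value (f df : R -> R) (a b : R) : a < b ->
  (forall x, a <= x <= b -> is_derive f x (df x)) ->
  exists c, a < c < b /\ f b - f a = df c * (b - a).
Proof.
  intros Hab Hd. destruct (MVT_cor2 f df a b Hab) as [c [Heq Hc]].
  - intros c Hc. apply is_derive_Reals. now apply Hd.
  - exists c. split; [lra | exact Heq].
Qed.

Lemma continuity_pt_is_derive (f : R -> R) x l : is_derive f x l -> continuity_pt f x.
Proof. intros Hf. apply continuity_pt_filterlim. apply (ex_derive_continuous f x). now exists l. Qed.

Lemma continuity_pt_eps (f : R -> R) x : continuity_pt f x ->
  forall e, 0 < e -> exists d, 0 < d /\ forall v, Rabs (v - x) < d -> Rabs (f v - f x) < e.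
Proof.
  intros Hf e He. destruct (Hf e He) as [d [Hd Hfd]]. exists d. split; [lra |].
  intros v Hv. destruct (Req_dec v x) as [-> | Hne].
  - rewrite Rminus_eq_0, Rabs_R0. exact He.
  - apply (Hfd v). split; [split; [exact I | congruence] | exact Hv].
Qed.

Lemma IVT_interval (f : R -> R) a b y : (forall x, continuity_pt f x) -> a <= b ->
  Rmin (f a) (f b) <= y <= Rmax (f a) (f b) -> exists x, a <= x <= b /\ f x = y.
Proof.
  intros Hc Hab Hy. destruct (IVT_gen f a b y Hc Hy) as [x [Hx Hfx]].
  exists x. rewrite Rmin_left, Rmax_right in Hx by lra. auto.
Qed.

Lemma strictly_increasing_of_derive_pos (f df : R -> R) a b :
  (forall x, is_derive f x (df x)) -> (forall x, a < x < b -> 0 < df x) -> a < b -> f a < f b.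
Proof.
  intros Hd Hpos Hab. destruct (mean_value f df a b Hab) as [c [Hc Heq]]; [intros; apply Hd |].
  assert (0 < df c * (b - a)) by (apply Rmult_lt_0_compat; [apply Hpos | ]; lra). lra.
Qed.

Lemma is_derive_reflect (f df : R -> R) x0 x : (forall x, is_derive f x (df x)) ->
  is_derive (fun x => f (2 * x0 - x)) x (- df (2 * x0 - x)).
Proof.
  intros Hf.
  assert (Hl : is_derive (fun x => 2 * x0 - x) x (-1)) by (auto_derive; [exact I | ring]).
  pose proof (is_derive_comp f _ x _ _ (Hf (2 * x0 - x)) Hl) as Hc.
  replace (- df (2 * x0 - x)) with (scal (-1) (df (2 * x0 - x))); [exact Hc |].
  unfold scal; simpl; unfold mult; simpl. ring.
Qed.

Lemma steep_unbounded_right (h dh : R -> R) x1 m B : 0 < m ->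
  (forall x, is_derive h x (dh x)) -> (forall x, x1 <= x -> m <= Rabs (dh x)) ->
  ~ (forall x, x1 <= x -> Rabs (h x) <= B).
Proof.
  intros Hm Hd Hsteep Hbd.
  assert (HB : 0 <= B) by (apply Rle_trans with (Rabs (h x1)); [apply Rabs_pos | apply Hbd; lra]).
  set (T := (2 * B + 1) / m).
  assert (HT : 0 < T) by (unfold T; apply Rdiv_lt_0_compat; lra).
  assert (HmT : m * T = 2 * B + 1) by (unfold T; field; lra).
  destruct (mean_value h dh x1 (x1 + T)) as [c [Hc Heq]]; [lra | intros; apply Hd |].
  assert (Hgrow : m * T <= Rabs (h (x1 + T) - h x1)).
  { rewrite Heq, Rabs_mult. replace (x1 + T - x1) with T by ring.
    rewrite (Rabs_right T) by lra. apply Rmult_le_compat_r; [lra | apply Hsteep; lra]. }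
  pose proof (Rabs_triang (h (x1 + T)) (- h x1)) as Htri. rewrite Rabs_Ropp in Htri.
  pose proof (Hbd (x1 + T) ltac:(lra)). pose proof (Hbd x1 ltac:(lra)).
  unfold Rminus in Hgrow. lra.
Qed.

Lemma steep_unbounded_left (h dh : R -> R) x1 m B : 0 < m ->
  (forall x, is_derive h x (dh x)) -> (forall x, x <= x1 -> m <= Rabs (dh x)) ->
  ~ (forall x, x <= x1 -> Rabs (h x) <= B).
Proof.
  intros Hm Hd Hsteep Hbd.
  apply (steep_unbounded_right (fun x => h (2 * x1 - x)) (fun x => - dh (2 * x1 - x)) x1 m B Hm).
  - intros x. now apply is_derive_reflect.
  - intros x Hx. rewrite Rabs_Ropp. apply Hsteep. lra.
  - intros x Hx. apply Hbd. lra.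
Qed.

Lemma list_upper_bound (l : list R) : exists M, forall x, In x l -> x <= M.
Proof.
  induction l as [| a l [M HM]].
  - exists 0. intros x [].
  - exists (Rmax a M). intros x [-> | Hx]; [apply Rmax_l |].
    eapply Rle_trans; [apply HM; auto | apply Rmax_r].
Qed.

Lemma range_sup (y : R -> R) B : (forall x, y x <= B) ->
  exists s, (forall x, y x <= s) /\ (forall z, z < s -> exists x, z < y x).
Proof.
  intros HB. destruct (completeness (fun z => exists x, z = y x)) as [s [Hub Hlub]].
  - exists B. intros z [x ->]. apply HB.
  - exists (y 0), 0. reflexivity.
  - exists s. split; [intros x; apply Hub; now exists x |].
    intros z Hz. apply NNPP. intros Hn. assert (s <= z); [| lra].
    apply Hlub. intros w [x ->]. apply Rnot_lt_le. intros Hlt. apply Hn. now exists x.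
Qed.

Lemma range_inf (y : R -> R) B : (forall x, B <= y x) ->
  exists i, (forall x, i <= y x) /\ (forall z, i < z -> exists x, y x < z).
Proof.
  intros HB. destruct (range_sup (fun x => - y x) (- B)) as [s [Hub Happ]].
  - intros x. specialize (HB x). lra.
  - exists (- s). split.
    + intros x. specialize (Hub x). lra.
    + intros z Hz. destruct (Happ (- z)) as [x Hx]; [lra |]. exists x. lra.
Qed.

Lemma continuous_nonzero_constant_sign (p : R -> R) (I : R -> Prop) x1 :
  (forall x, continuity_pt p x) -> (forall u w z, I u -> I w -> u <= z <= w -> I z) ->
  (forall z, I z -> p z <> 0) -> I x1 ->
  (forall x, I x -> 0 < p x) \/ (forall x, I x -> p x < 0).
Proof.
  intros Hc Hconv Hnz Hx1.
  assert (no_change : forall u w, I u -> I w -> u <= w -> 0 < p u * p w).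
  { intros u w Hu Hw Huw. apply Rnot_le_lt. intros Hle.
    destruct (IVT_interval p u w 0 Hc Huw) as [z [Hz Hpz]].
    - pose proof (Hnz u Hu). pose proof (Hnz w Hw).
      unfold Rmin, Rmax. destruct (Rle_dec (p u) (p w)); split; nra.
    - exact (Hnz z (Hconv u w z Hu Hw Hz) Hpz). }
  assert (same : forall x, I x -> 0 < p x * p x1).
  { intros x Hx. destruct (Rle_or_lt x x1).
    - now apply no_change.
    - rewrite Rmult_comm. apply no_change; auto. lra. }
  pose proof (Hnz x1 Hx1).
  destruct (Rlt_or_le 0 (p x1)); [left | right]; intros x Hx; specialize (same x Hx); nra.
Qed.

Lemma Rabs_ge_of_sqr_ge (q c : R) : 0 < c -> c <= q ^ 2 -> Rmin 1 c <= Rabs q.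
Proof.
  intros Hc Hq. rewrite <- pow2_abs in Hq. pose proof (Rabs_pos q).
  destruct (Rle_or_lt 1 (Rabs q)); [pose proof (Rmin_l 1 c) | pose proof (Rmin_r 1 c)]; nra.
Qed.

Lemma pow_lt_pow_l (u v : R) (m : nat) : 0 <= u < v -> (0 < m)%nat -> u ^ m < v ^ m.
Proof.
  intros Huv Hm. destruct m as [| m]; [lia |]. clear Hm.
  induction m as [| m IH]; [simpl; lra |].
  change (u ^ S (S m)) with (u * u ^ S m). change (v ^ S (S m)) with (v * v ^ S m).
  pose proof (pow_le u (S m) ltac:(lra)). nra.
Qed.

Lemma quadratic_no_three_roots (A B c w1 w2 w3 : R) : c <> 0 -> w1 < w2 -> w2 < w3 ->
  A + B * w1 + c * w1 ^ 2 = 0 -> A + B * w2 + c * w2 ^ 2 = 0 -> A + B * w3 + c * w3 ^ 2 = 0 ->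
  False.
Proof.
  intros Hc H12 H23 E1 E2 E3.
  assert (F12 : (w2 - w1) * (B + c * (w1 + w2)) = 0) by nra.
  assert (F23 : (w3 - w2) * (B + c * (w2 + w3)) = 0) by nra.
  apply Rmult_integral in F12 as [F12 | F12]; [lra |].
  apply Rmult_integral in F23 as [F23 | F23]; [lra |].
  assert (Hx : c * (w3 - w1) = 0) by lra.
  apply Rmult_integral in Hx as [Hx | Hx]; lra.
Qed.

(** * Uniqueness and reflection symmetry of solutions *)

Definition locally_lipschitz_pos (G : R -> R) : Prop :=
  forall al be, 0 < al -> exists L, forall u v, al <= u <= be -> al <= v <= be ->
    Rabs (G u - G v) <= L * Rabs (u - v).

Lemma continuity_pt_locally_lipschitz_pos (G : R -> R) l :
  locally_lipschitz_pos G -> 0 < l -> continuity_pt G l.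
Proof.
  intros HG Hl e He. destruct (HG (l / 2) (2 * l) ltac:(lra)) as [L HL].
  set (M := Rabs L + 1).
  assert (HM : 0 < M) by (unfold M; pose proof (Rabs_pos L); lra).
  exists (Rmin (l / 2) (e / M)). split; [apply Rmin_glb_lt; [lra | apply Rdiv_lt_0_compat; lra] |].
  intros x [_ Hx]. simpl in *. unfold R_dist in *.
  pose proof (Rmin_l (l / 2) (e / M)). pose proof (Rmin_r (l / 2) (e / M)).
  assert (Hxl : Rabs (x - l) < e / M) by lra.
  apply Rabs_def2 in Hx as [Hx1 Hx2].
  apply Rle_lt_trans with (Rabs L * Rabs (x - l)).
  - eapply Rle_trans; [apply HL; lra |].
    apply Rmult_le_compat_r; [apply Rabs_pos | apply Rle_abs].
  - apply (Rmult_lt_compat_l M) in Hxl; [| lra]. replace (M * (e / M)) with e in Hxl by (field; lra).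
    pose proof (Rabs_pos (x - l)). unfold M in Hxl. nra.
Qed.

Lemma locally_lipschitz_pos_C1 (f df : R -> R) :
  (forall v, 0 < v -> is_derive f v (df v)) -> (forall v, 0 < v -> continuity_pt df v) ->
  locally_lipschitz_pos f.
Proof.
  intros Hd Hc al be Hal. destruct (Rle_or_lt al be) as [Hab | Hab]; [| exists 0; intros; lra].
  destruct (continuity_ab_maj (fun v => Rabs (df v)) al be Hab) as [vM [HM _]].
  { intros v Hv. apply (continuity_pt_comp df Rabs); [apply Hc; lra | apply Rcontinuity_abs]. }
  exists (Rabs (df vM)).
  assert (Hlt : forall u v, al <= u <= be -> al <= v <= be -> u < v ->
    Rabs (f u - f v) <= Rabs (df vM) * Rabs (u - v)).
  { intros u v Hu Hv Huv. destruct (mean_value f df u v Huv) as [c [Hcuv Heq]];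
      [intros; apply Hd; lra |].
    rewrite Rabs_minus_sym, Heq, Rabs_mult, (Rabs_minus_sym u).
    apply Rmult_le_compat_r; [apply Rabs_pos | apply HM; lra]. }
  intros u v Hu Hv. destruct (Rtotal_order u v) as [Huv | [<- | Hvu]]; [auto | |].
  - rewrite !Rminus_eq_0, Rabs_R0, Rmult_0_r. lra.
  - rewrite Rabs_minus_sym, (Rabs_minus_sym u). auto.
Qed.

Lemma locally_lipschitz_pos_ext (f g : R -> R) : (forall v, 0 < v -> f v = g v) ->
  locally_lipschitz_pos f -> locally_lipschitz_pos g.
Proof.
  intros Hfg Hf al be Hal. destruct (Hf al be Hal) as [L HL]. exists L.
  intros u v Hu Hv. rewrite <- !Hfg by lra. now apply HL.
Qed.

Lemma continuous_pos_bounds (y : R -> R) s t : s <= t ->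
  (forall x, continuity_pt y x) -> (forall x, 0 < y x) ->
  exists al be, 0 < al /\ forall x, s <= x <= t -> al <= y x <= be.
Proof.
  intros Hst Hc Hpos.
  destruct (continuity_ab_min y s t Hst (fun c _ => Hc c)) as [xm [Hm _]].
  destruct (continuity_ab_maj y s t Hst (fun c _ => Hc c)) as [xM [HM _]].
  exists (y xm), (y xM). split; [apply Hpos |]. intros x Hx. split; auto.
Qed.

(* The Gronwall step of uniqueness: with [u], [w], [D] the differences of two solutions, of
   their derivatives and of their accelerations, [(u^2 + w^2) e^(-(1+L) x)] is nonincreasing. *)
Lemma energy_dissipation (u w D L : R) : 0 <= L -> Rabs D <= L * Rabs u ->
  2 * u * w + 2 * w * D - (1 + L) * (u ^ 2 + w ^ 2) <= 0.
Proof.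
  intros HL HD.
  assert (HwD : w * D <= Rabs w * (L * Rabs u)).
  { apply Rle_trans with (Rabs (w * D)); [apply Rle_abs |].
    rewrite Rabs_mult. apply Rmult_le_compat_l; [apply Rabs_pos | exact HD]. }
  assert (Huw : 2 * Rabs u * Rabs w <= u ^ 2 + w ^ 2).
  { rewrite <- (pow2_abs u), <- (pow2_abs w). pose proof (pow2_ge_0 (Rabs u - Rabs w)). nra. }
  pose proof (pow2_ge_0 (u - w)). pose proof (Rmult_le_compat_l L _ _ HL Huw). nra.
Qed.

Section Solutions.
Variable G : R -> R.

Definition solution (y q : R -> R) : Prop :=
  (forall x, 0 < y x) /\ (forall x, is_derive y x (q x)) /\ (forall x, is_derive q x (G (y x))).

Lemma solution_reflect y q x0 : solution y q ->
  solution (fun x => y (2 * x0 - x)) (fun x => - q (2 * x0 - x)).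
Proof.
  intros [Hpos [Dy Dq]]. split; [intros; apply Hpos | split].
  - intros x. now apply is_derive_reflect.
  - intros x. pose proof (is_derive_opp _ _ _ (is_derive_reflect q (fun x => G (y x)) x0 x Dq)) as H.
    simpl in H. rewrite Ropp_involutive in H. exact H.
Qed.

Lemma energy_is_derive y1 q1 y2 q2 K x0 x : solution y1 q1 -> solution y2 q2 ->
  is_derive (fun x => ((y1 x - y2 x) ^ 2 + (q1 x - q2 x) ^ 2) * exp (- (K * (x - x0)))) x
    ((2 * (y1 x - y2 x) * (q1 x - q2 x) + 2 * (q1 x - q2 x) * (G (y1 x) - G (y2 x))
      - K * ((y1 x - y2 x) ^ 2 + (q1 x - q2 x) ^ 2)) * exp (- (K * (x - x0)))).
Proof.
  intros [_ [D1 E1]] [_ [D2 E2]]. auto_derive.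
  - repeat split; eexists; eauto.
  - replace (Derive (fun t => y1 t) x) with (q1 x) by (symmetry; apply is_derive_unique, D1).
    replace (Derive (fun t => y2 t) x) with (q2 x) by (symmetry; apply is_derive_unique, D2).
    replace (Derive (fun t => q1 t) x) with (G (y1 x)) by (symmetry; apply is_derive_unique, E1).
    replace (Derive (fun t => q2 t) x) with (G (y2 x)) by (symmetry; apply is_derive_unique, E2).
    change (x + - x0) with (x - x0). ring.
Qed.

Hypothesis G_lip : locally_lipschitz_pos G.

Lemma solution_unique_forward y1 q1 y2 q2 x0 : solution y1 q1 -> solution y2 q2 ->
  y1 x0 = y2 x0 -> q1 x0 = q2 x0 -> forall t, x0 <= t -> y1 t = y2 t.
Proof.
  intros S1 S2 Hy Hq t Ht.
  destruct (Rle_lt_or_eq _ _ Ht) as [Hlt | <-]; [| exact Hy].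
  pose proof S1 as [P1 [D1 _]]. pose proof S2 as [P2 [D2 _]].
  destruct (continuous_pos_bounds y1 x0 t) as [al1 [be1 [Hal1 B1]]];
    [lra | intros; eapply continuity_pt_is_derive, D1 | exact P1 |].
  destruct (continuous_pos_bounds y2 x0 t) as [al2 [be2 [Hal2 B2]]];
    [lra | intros; eapply continuity_pt_is_derive, D2 | exact P2 |].
  destruct (G_lip (Rmin al1 al2) (Rmax be1 be2)) as [L HL]; [now apply Rmin_glb_lt |].
  set (K := 1 + Rabs L).
  destruct (mean_value _ _ x0 t Hlt (fun x _ => energy_is_derive y1 q1 y2 q2 K x0 x S1 S2))
    as [c [Hc Heq]].
  assert (HD : Rabs (G (y1 c) - G (y2 c)) <= Rabs L * Rabs (y1 c - y2 c)).
  { specialize (B1 c ltac:(lra)). specialize (B2 c ltac:(lra)).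
    apply Rle_trans with (L * Rabs (y1 c - y2 c)).
    - apply HL; split;
        solve [apply Rle_trans with al1; [apply Rmin_l | lra]
              | apply Rle_trans with al2; [apply Rmin_r | lra]
              | apply Rle_trans with be1; [lra | apply Rmax_l]
              | apply Rle_trans with be2; [lra | apply Rmax_r]].
    - apply Rmult_le_compat_r; [apply Rabs_pos | apply Rle_abs]. }
  pose proof (energy_dissipation _ (q1 c - q2 c) _ _ (Rabs_pos L) HD) as Hdis.
  assert (E0 : ((y1 x0 - y2 x0) ^ 2 + (q1 x0 - q2 x0) ^ 2) * exp (- (K * (x0 - x0))) = 0)
    by (rewrite Hy, Hq; ring).
  pose proof (exp_pos (- (K * (c - x0)))). pose proof (exp_pos (- (K * (t - x0)))).
  pose proof (pow2_ge_0 (y1 t - y2 t)). pose proof (pow2_ge_0 (q1 t - q2 t)).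
  assert (Hneg : (2 * (y1 c - y2 c) * (q1 c - q2 c) + 2 * (q1 c - q2 c) * (G (y1 c) - G (y2 c))
      - K * ((y1 c - y2 c) ^ 2 + (q1 c - q2 c) ^ 2)) * exp (- (K * (c - x0))) * (t - x0) <= 0).
  { apply Rmult_le_0_r; [| lra]. apply Rmult_le_0_r; [exact Hdis | lra]. }
  assert (Ht0 : ((y1 t - y2 t) ^ 2 + (q1 t - q2 t) ^ 2) * exp (- (K * (t - x0))) <= 0) by lra.
  assert (Hsq : (y1 t - y2 t) ^ 2 = 0) by nra.
  apply Rminus_diag_uniq. nra.
Qed.

Lemma solution_unique y1 q1 y2 q2 x0 : solution y1 q1 -> solution y2 q2 ->
  y1 x0 = y2 x0 -> q1 x0 = q2 x0 -> forall t, y1 t = y2 t.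
Proof.
  intros S1 S2 Hy Hq t. destruct (Rle_or_lt x0 t) as [Ht | Ht].
  - eapply solution_unique_forward; eauto.
  - pose proof (solution_unique_forward _ _ _ _ x0
      (solution_reflect _ _ x0 S1) (solution_reflect _ _ x0 S2)) as U.
    simpl in U. replace (2 * x0 - x0) with x0 in U by ring.
    specialize (U Hy ltac:(now rewrite Hq) (2 * x0 - t) ltac:(lra)).
    now replace (2 * x0 - (2 * x0 - t)) with t in U by ring.
Qed.

Lemma solution_symmetric y q x0 : solution y q -> q x0 = 0 -> forall t, y t = y (2 * x0 - t).
Proof.
  intros S Hq. apply (solution_unique _ _ _ _ x0 S (solution_reflect _ _ x0 S)).
  - f_equal. ring.
  - replace (2 * x0 - x0) with x0 by ring. rewrite Hq. ring.
Qed.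

Lemma solution_periodic y q x1 x2 : solution y q -> q x1 = 0 -> q x2 = 0 ->
  forall x, y (x + 2 * (x2 - x1)) = y x.
Proof.
  intros S H1 H2 x. rewrite (solution_symmetric y q x2 S H2), (solution_symmetric y q x1 S H1 x).
  f_equal. ring.
Qed.
End Solutions.

(** * From the shape of a graph to its type *)

Section Periodic.
Variables (g : R -> R) (T : R).
Hypothesis T_pos : 0 < T.
Hypothesis g_periodic : forall x, g (x + T) = g x.

Lemma periodic_nat_shift (k : nat) x : g (x + INR k * T) = g x.
Proof.
  induction k as [| k IHk]; [f_equal; simpl; ring |].
  rewrite S_INR. replace (x + (INR k + 1) * T) with (x + INR k * T + T) by ring.
  now rewrite g_periodic.
Qed.

Lemma attained_infinitely_periodic x : attained_infinitely g (g x).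
Proof.
  intros [l Hl]. destruct (list_upper_bound l) as [M HM].
  destruct (INR_archimed T (M - x) T_pos) as [N HN].
  specialize (HM _ (Hl _ (periodic_nat_shift N x))). lra.
Qed.

Lemma periodic_representative x : exists x', 0 <= x' <= T /\ g x' = g x.
Proof.
  destruct (INR_archimed T (- x) T_pos) as [N HN].
  set (y := x + INR N * T).
  assert (Hy : 0 <= y / T) by (apply Rdiv_le_0_compat; unfold y; lra).
  destruct (nfloor_ex _ Hy) as [k [Hk1 Hk2]].
  assert (Hyk : INR k * T <= y < INR k * T + T).
  { replace y with (y / T * T) by (field; lra). split; nra. }
  exists (y - INR k * T). split; [lra |].
  rewrite <- (periodic_nat_shift k). replace (y - INR k * T + INR k * T) with y by ring.
  apply periodic_nat_shift.
Qed.

Lemma type1_of_periodic : (forall x, continuity_pt g x) -> (forall x, 0 < g x) ->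
  (exists x y, g x <> g y) -> type1 g.
Proof.
  intros Hc Hpos [xa [xb Hne]].
  destruct (continuity_ab_min g 0 T ltac:(lra) (fun c _ => Hc c)) as [xm [Hm _]].
  destruct (continuity_ab_maj g 0 T ltac:(lra) (fun c _ => Hc c)) as [xM [HM _]].
  assert (Hrange : forall x, g xm <= g x <= g xM).
  { intros x. destruct (periodic_representative x) as [x' [Hx' <-]]. auto. }
  split; [exists T; auto |]. exists (g xm), (g xM).
  split; [| split; [| split; apply attained_infinitely_periodic]].
  - split; [apply Hpos |]. pose proof (Hrange xa). pose proof (Hrange xb).
    destruct (Rle_lt_or_eq _ _ (proj2 (Hrange xm))); [assumption | exfalso; lra].
  - intros y. split; [intros [x <-]; auto |]. intros Hy.
    destruct (IVT_gen g xm xM y Hc) as [x [_ Hx]]; [| now exists x].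
    split; [apply Rle_trans with (g xm); [apply Rmin_l | lra]
           | apply Rle_trans with (g xM); [lra | apply Rmax_r]].
Qed.
End Periodic.

Section Valley.
Variables (k : R -> R) (x0 : R).
Hypothesis k_continuous : forall x, continuity_pt k x.
Hypothesis k_symmetric : forall t, k t = k (2 * x0 - t).
Hypothesis k_increasing : forall u w, x0 <= u -> u < w -> k u < k w.

Lemma valley_reflect x : exists x', x0 <= x' /\ k x' = k x /\ (x' = x \/ x' = 2 * x0 - x).
Proof.
  destruct (Rle_or_lt x0 x).
  - exists x. auto.
  - exists (2 * x0 - x). split; [lra |]. split; [symmetry; apply k_symmetric | auto].
Qed.

Lemma valley_bottom x : k x0 <= k x.
Proof.
  destruct (valley_reflect x) as [x' [Hx' [<- _]]].
  destruct (Rle_lt_or_eq _ _ Hx') as [Hlt | <-]; [left; now apply k_increasing | lra].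
Qed.

Lemma valley_bottom_once : attained_once k (k x0).
Proof.
  exists x0. split; [reflexivity |]. intros x Hx. destruct (valley_reflect x) as [x' [Hx' [Hk Hor]]].
  destruct (Rle_lt_or_eq _ _ Hx') as [Hlt | <-].
  - pose proof (k_increasing x0 x' (Rle_refl _) Hlt). lra.
  - destruct Hor; lra.
Qed.

Lemma valley_attained_right y : k x0 <= y -> (exists x, y < k x) -> exists z, x0 <= z /\ k z = y.
Proof.
  intros Hy [x Hx]. destruct (valley_reflect x) as [x' [Hx' [Hk _]]].
  destruct (IVT_interval k x0 x' y k_continuous Hx') as [z [Hz Hkz]].
  - pose proof (valley_bottom x'). rewrite Rmin_left, Rmax_right; lra.
  - exists z. split; [lra | exact Hkz].
Qed.

Lemma valley_attained_twice y : k x0 < y -> (exists x, y < k x) -> attained_twice k y.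
Proof.
  intros Hy Hup. destruct (valley_attained_right y ltac:(lra) Hup) as [z [Hz Hkz]].
  assert (Hz' : x0 < z) by (destruct (Rle_lt_or_eq _ _ Hz); [assumption | subst; lra]).
  exists z, (2 * x0 - z). split; [lra |]. split; [exact Hkz |].
  split; [now rewrite <- k_symmetric |].
  intros x Hkx. destruct (valley_reflect x) as [x' [Hx' [Hk Hor]]].
  assert (x' = z).
  { destruct (Rtotal_order x' z) as [Hlt | [Heq | Hgt]]; [| exact Heq |].
    - pose proof (k_increasing x' z Hx' Hlt). lra.
    - pose proof (k_increasing z x' Hz Hgt). lra. }
  subst x'. destruct Hor; [left | right]; lra.
Qed.

Lemma valley_not_periodic : ~ periodic k.
Proof.
  intros [T [HT Hper]]. pose proof (k_increasing x0 (x0 + T) (Rle_refl _) ltac:(lra)).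
  rewrite Hper in H. lra.
Qed.

Lemma valley_no_max x : exists x', k x < k x'.
Proof.
  destruct (valley_reflect x) as [x' [Hx' [<- _]]]. exists (x' + 1). apply k_increasing; lra.
Qed.

Lemma type3_of_valley : (forall M, exists x, M < k x) -> type3 k.
Proof.
  intros Hunb. exists (k x0). split; [| split; [apply valley_bottom_once |]].
  - intros y. split; [intros [x <-]; apply valley_bottom |].
    intros Hy. destruct (valley_attained_right y Hy (Hunb y)) as [z [_ Hz]]. now exists z.
  - intros y Hy. apply valley_attained_twice; [exact Hy | apply Hunb].
Qed.

Lemma type4_of_valley B : (forall x, k x <= B) -> type4 k.
Proof.
  intros HB. destruct (range_sup k B HB) as [v2 [Hle Happ]].
  assert (Hlt : forall x, k x < v2).
  { intros x. destruct (valley_no_max x) as [x' Hx']. pose proof (Hle x'). lra. }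
  split; [apply valley_not_periodic |]. exists (k x0), v2.
  split; [| split; [apply valley_bottom_once |]].
  - intros y. split; [intros [x <-]; split; [apply valley_bottom | apply Hlt] |].
    intros [Hy1 Hy2]. destruct (valley_attained_right y Hy1 (Happ y Hy2)) as [z [_ Hz]].
    now exists z.
  - intros y [Hy1 Hy2]. apply valley_attained_twice; [exact Hy1 | now apply Happ].
Qed.
End Valley.

Lemma type5_of_type4_opp (g : R -> R) : type4 (fun x => - g x) -> type5 g.
Proof.
  intros [Hnp [v1 [v2 [Hr [[x0 [Hx0 Hu]] Ht]]]]]. cbv beta in *. split.
  - intros [T [HT Hper]]. apply Hnp. exists T. split; [exact HT |]. intros x. now rewrite Hper.
  - exists (- v2), (- v1). split; [| split].
    + intros y. split.
      * intros [x Hx]. assert (Hin : in_range (fun x => - g x) (- y)) by (exists x; lra).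
        apply Hr in Hin. lra.
      * intros Hy. destruct (proj2 (Hr (- y)) ltac:(lra)) as [x Hx]. exists x. lra.
    + exists x0. split; [lra |]. intros x' Hx'. apply Hu. lra.
    + intros y Hy. destruct (Ht (- y) ltac:(lra)) as [x1 [x2 [Hne [H1 [H2 H3]]]]].
      exists x1, x2. repeat split; [exact Hne | lra | lra |]. intros x Hx. apply H3. lra.
Qed.

Lemma type2_reflect (g : R -> R) x0 : type2 (fun x => g (2 * x0 - x)) -> type2 g.
Proof.
  intros [Hinj [v1 [Hv1 Hr]]]. split.
  - intros u w Huw. enough (2 * x0 - u = 2 * x0 - w) by lra. apply Hinj.
    now replace (2 * x0 - (2 * x0 - u)) with u by ring; replace (2 * x0 - (2 * x0 - w)) with w by ring.
  - exists v1. split; [exact Hv1 |]. intros z. rewrite <- Hr. split; intros [x Hx].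
    + exists (2 * x0 - x). now replace (2 * x0 - (2 * x0 - x)) with x by ring.
    + now exists (2 * x0 - x).
Qed.

(** * Classification of positive solutions *)

Section Classification.
Variables F G : R -> R.
Hypothesis G_lip : locally_lipschitz_pos G.
Hypothesis F_derive : forall v, 0 < v -> is_derive F v (2 * G v).
Hypothesis F_near_0 : exists eps, 0 < eps /\
  ((forall v, 0 < v < eps -> F v < 0) \/ (exists m, 0 < m /\ forall v, 0 < v < eps -> m <= F v)).
Hypothesis G_no_three_zeros : forall u c w, 0 < u -> u < c -> c < w ->
  G u = 0 -> G c = 0 -> G w = 0 -> False.

(* A solution converging at [+oo] converges to an equilibrium: otherwise [y] (if [F l > 0])
   or [q] (if [G l <> 0]) would have a derivative bounded away from [0] while staying bounded. *)
Lemma right_limit_equilibrium y q l : 0 < l -> solution G y q -> (forall x, q x ^ 2 = F (y x)) ->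
  (forall e, 0 < e -> exists x1, forall x, x1 <= x -> Rabs (y x - l) < e) -> F l = 0 /\ G l = 0.
Proof.
  intros Hl [Hpos [Dy Dq]] Henergy Hlim.
  assert (HF : F l = 0).
  { apply NNPP. intros HF. assert (Ha : 0 < Rabs (F l) / 2) by (apply Rabs_pos_lt in HF; lra).
    destruct (continuity_pt_eps F l (continuity_pt_is_derive _ _ _ (F_derive l Hl)) _ Ha)
      as [d [Hd Hfd]].
    destruct (Hlim d Hd) as [x1 Hx1].
    assert (Hnear : forall x, x1 <= x -> Rabs (F (y x) - F l) < Rabs (F l) / 2)
      by (intros x Hx; apply Hfd, Hx1, Hx).
    destruct (Rlt_or_le (F l) 0) as [Hneg | Hnn].
    - specialize (Hnear x1 (Rle_refl _)). rewrite (Rabs_left (F l)) in Hnear by lra.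
      apply Rabs_def2 in Hnear. rewrite <- Henergy in Hnear. pose proof (pow2_ge_0 (q x1)). lra.
    - rewrite (Rabs_right (F l)) in Hnear by lra.
      apply (steep_unbounded_right y q x1 (Rmin 1 (F l / 2)) (l + d));
        [apply Rmin_glb_lt; lra | exact Dy | |].
      + intros x Hx. apply Rabs_ge_of_sqr_ge; [lra |]. rewrite Henergy.
        specialize (Hnear x Hx). apply Rabs_def2 in Hnear. lra.
      + intros x Hx. specialize (Hx1 x Hx). apply Rabs_def2 in Hx1.
        pose proof (Hpos x). rewrite Rabs_right; lra. }
  split; [exact HF |]. apply NNPP. intros HG.
  assert (Ha : 0 < Rabs (G l) / 2) by (apply Rabs_pos_lt in HG; lra).
  destruct (continuity_pt_eps G l (continuity_pt_locally_lipschitz_pos G l G_lip Hl) _ Ha)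
    as [d1 [Hd1 Hg1]].
  destruct (continuity_pt_eps F l (continuity_pt_is_derive _ _ _ (F_derive l Hl)) 1 Rlt_0_1)
    as [d2 [Hd2 Hf2]].
  destruct (Hlim (Rmin d1 d2) (Rmin_glb_lt _ _ _ Hd1 Hd2)) as [x1 Hx1].
  apply (steep_unbounded_right q (fun x => G (y x)) x1 (Rabs (G l) / 2) 1 Ha Dq).
  - intros x Hx. specialize (Hg1 (y x) (Rlt_le_trans _ _ _ (Hx1 x Hx) (Rmin_l _ _))).
    pose proof (Rabs_triang_inv (G l) (G (y x))). rewrite Rabs_minus_sym in Hg1. lra.
  - intros x Hx. specialize (Hf2 (y x) (Rlt_le_trans _ _ _ (Hx1 x Hx) (Rmin_r _ _))).
    rewrite HF, Rminus_0_r, <- Henergy, <- pow2_abs, Rabs_right in Hf2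
      by (apply Rle_ge, pow2_ge_0).
    pose proof (Rabs_pos (q x)). nra.
Qed.

Lemma left_limit_equilibrium y q l : 0 < l -> solution G y q -> (forall x, q x ^ 2 = F (y x)) ->
  (forall e, 0 < e -> exists x1, forall x, x <= x1 -> Rabs (y x - l) < e) -> F l = 0 /\ G l = 0.
Proof.
  intros Hl S Henergy Hlim. apply (right_limit_equilibrium _ _ l Hl (solution_reflect G y q 0 S)).
  - intros x. rewrite <- Henergy. ring.
  - intros e He. destruct (Hlim e He) as [x1 Hx1]. exists (- x1). intros x Hx. apply Hx1. lra.
Qed.

Section Increasing.
Variables y q : R -> R.
Hypothesis y_solution : solution G y q.
Hypothesis y_energy : forall x, q x ^ 2 = F (y x).
Hypothesis q_pos : forall x, 0 < q x.

Lemma increasing_lt u w : u < w -> y u < y w.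
Proof.
  pose proof y_solution as [_ [Dy _]].
  intros Huw. apply (strictly_increasing_of_derive_pos y q); auto.
Qed.

Lemma increasing_le u w : u <= w -> y u <= y w.
Proof. intros [Hlt | <-]; [left; now apply increasing_lt | lra]. Qed.

(* Near [0] either [F < 0], which the energy law forbids, or [|y'|] is bounded below,
   which is impossible for the bounded [y] on a left ray. *)
Lemma increasing_inf_pos :
  exists i, 0 < i /\ (forall x, i < y x) /\ (forall z, i < z -> exists x, y x < z).
Proof.
  pose proof y_solution as [Hpos [Dy _]].
  destruct (range_inf y 0) as [i [Hi Happ]]; [intros x; left; apply Hpos |].
  exists i. split; [| split; [| exact Happ]].
  - destruct F_near_0 as [eps [Heps Hnear]]. apply Rlt_le_trans with eps; [exact Heps |].
    apply Rnot_lt_le. intros Hie. destruct (Happ eps Hie) as [x1 Hx1].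
    assert (Hsmall : forall x, x <= x1 -> 0 < y x < eps).
    { intros x Hx. pose proof (increasing_le _ _ Hx). pose proof (Hpos x). lra. }
    destruct Hnear as [Hneg | [m [Hm Hge]]].
    + specialize (Hneg _ (Hsmall x1 (Rle_refl _))). rewrite <- y_energy in Hneg.
      pose proof (pow2_ge_0 (q x1)). lra.
    + apply (steep_unbounded_left y q x1 (Rmin 1 m) eps); [apply Rmin_glb_lt; lra | exact Dy | |].
      * intros x Hx. apply Rabs_ge_of_sqr_ge; [lra |]. rewrite y_energy. apply Hge, Hsmall, Hx.
      * intros x Hx. specialize (Hsmall x Hx). rewrite Rabs_right; lra.
  - intros x. pose proof (Hi (x - 1)). pose proof (increasing_lt (x - 1) x ltac:(lra)). lra.
Qed.

(* If [y] were bounded, both ends of its range would be zeros of [G], and so would be,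
   by the mean value theorem for [F], some point in between. *)
Lemma increasing_unbounded M : exists x, M < y x.
Proof.
  apply NNPP. intros Hn.
  assert (HM : forall x, y x <= M).
  { intros x. apply Rnot_lt_le. intros Hlt. apply Hn. now exists x. }
  destruct (range_sup y M HM) as [s [Hs Hsapp]].
  destruct increasing_inf_pos as [i [Hi [Hii Hiapp]]].
  assert (His : i < s) by (pose proof (Hii 0); pose proof (Hs 0); lra).
  destruct (right_limit_equilibrium y q s) as [Fs Gs]; [lra | exact y_solution | exact y_energy | |].
  { intros e He. destruct (Hsapp (s - e)) as [x1 Hx1]; [lra |]. exists x1. intros x Hx.
    pose proof (increasing_le _ _ Hx). pose proof (Hs x). rewrite Rabs_left1; lra. }
  destruct (left_limit_equilibrium y q i) as [Fi Gi]; [lra | exact y_solution | exact y_energy | |].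
  { intros e He. destruct (Hiapp (i + e)) as [x1 Hx1]; [lra |]. exists x1. intros x Hx.
    pose proof (increasing_le _ _ Hx). pose proof (Hii x). rewrite Rabs_right; lra. }
  destruct (mean_value F (fun v => 2 * G v) i s His) as [c [Hc Hce]];
    [intros v Hv; apply F_derive; lra |].
  apply (G_no_three_zeros i c s Hi (proj1 Hc) (proj2 Hc) Gi); [| exact Gs].
  assert (Hprod : 2 * G c * (s - i) = 0) by lra.
  destruct (Rmult_integral _ _ Hprod); lra.
Qed.

Lemma type2_of_increasing : type2 y.
Proof.
  pose proof y_solution as [_ [Dy _]]. split.
  - intros u w Huw. destruct (Rtotal_order u w) as [Hlt | [Heq | Hgt]]; [| exact Heq |].
    + pose proof (increasing_lt _ _ Hlt). lra.
    + pose proof (increasing_lt _ _ Hgt). lra.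
  - destruct increasing_inf_pos as [i [Hi [Hii Hiapp]]]. exists i. split; [exact Hi |].
    intros z. split; [intros [x <-]; apply Hii |]. intros Hz.
    destruct (Hiapp z Hz) as [x1 Hx1]. destruct (increasing_unbounded z) as [x2 Hx2].
    destruct (Rle_or_lt x1 x2) as [H12 | H21]; [| pose proof (increasing_lt _ _ H21); lra].
    pose proof (increasing_le _ _ H12).
    destruct (IVT_interval y x1 x2 z (fun x => continuity_pt_is_derive _ _ _ (Dy x)) H12)
      as [x [_ Hx]]; [rewrite Rmin_left, Rmax_right; lra | now exists x].
Qed.
End Increasing.

Lemma type2_of_no_critical_point g p : solution G g p -> (forall x, p x ^ 2 = F (g x)) ->
  (forall x, p x <> 0) -> type2 g.
Proof.
  intros S Henergy Hnz. pose proof S as [_ [_ Dp]].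
  destruct (continuous_nonzero_constant_sign p (fun _ => True) 0) as [Hpos | Hneg]; auto.
  - intros x. eapply continuity_pt_is_derive, Dp.
  - apply (type2_of_increasing g p); auto.
  - apply (type2_reflect g 0), (type2_of_increasing _ _ (solution_reflect G g p 0 S)).
    + intros x. rewrite <- Henergy. ring.
    + intros x. specialize (Hneg (2 * 0 - x) I). lra.
Qed.

Lemma type345_of_one_critical_point g p x0 : solution G g p -> p x0 = 0 ->
  (forall z, x0 < z -> p z <> 0) -> type3 g \/ type4 g \/ type5 g.
Proof.
  intros S Hx0 Hnz. pose proof S as [Hpos [Dg Dp]].
  assert (Hcg : forall x, continuity_pt g x) by (intros x; eapply continuity_pt_is_derive, Dg).
  pose proof (solution_symmetric G G_lip g p x0 S Hx0) as Hsym.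
  destruct (continuous_nonzero_constant_sign p (fun z => x0 < z) (x0 + 1)) as [Hp | Hn];
    [intros x; eapply continuity_pt_is_derive, Dp | intros; lra | exact Hnz | lra | |].
  - assert (Hinc : forall u w, x0 <= u -> u < w -> g u < g w).
    { intros u w Hu Huw. apply (strictly_increasing_of_derive_pos g p); auto.
      intros x Hx. apply Hp. lra. }
    destruct (classic (forall M, exists x, M < g x)) as [Hunb | Hbd].
    + left. now apply (type3_of_valley g x0).
    + right; left. apply not_all_ex_not in Hbd as [M HM]. apply (type4_of_valley g x0 Hcg Hsym Hinc M).
      intros x. apply Rnot_lt_le. intros Hlt. apply HM. now exists x.
  - right; right. apply type5_of_type4_opp.
    apply (type4_of_valley (fun x => - g x) x0) with (B := 0).
    + intros x. now apply continuity_pt_opp.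
    + intros t. now rewrite <- Hsym.
    + intros u w Hu Huw. apply (strictly_increasing_of_derive_pos (fun x => - g x) (fun x => - p x)); auto.
      * intros x. apply (is_derive_opp g x (p x)), Dg.
      * intros x Hx. specialize (Hn x ltac:(lra)). lra.
    + intros x. specialize (Hpos x). lra.
Qed.

Theorem solution_classification g p : solution G g p -> (forall x, p x ^ 2 = F (g x)) ->
  (exists x y, g x <> g y) -> type1 g \/ type2 g \/ type3 g \/ type4 g \/ type5 g.
Proof.
  intros S Henergy Hnc. pose proof S as [Hpos [Dg _]].
  destruct (classic (exists x1 x2, x1 < x2 /\ p x1 = 0 /\ p x2 = 0))
    as [[x1 [x2 [H12 [H1 H2]]]] | Htwo].
  { left. apply (type1_of_periodic g (2 * (x2 - x1))); [lra | | | exact Hpos | exact Hnc].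
    - now apply (solution_periodic G G_lip g p).
    - intros x. eapply continuity_pt_is_derive, Dg. }
  destruct (classic (exists x0, p x0 = 0)) as [[x0 Hx0] | Hnone].
  - right; right. apply (type345_of_one_critical_point g p x0 S Hx0).
    intros z Hz Hpz. apply Htwo. now exists x0, z.
  - right; left. apply (type2_of_no_critical_point g p S Henergy).
    intros x Hx. apply Hnone. now exists x.
Qed.
End Classification.

(** * The potential [fpot] *)

(* [fpot'] is the derivative of [fpot], written with [w = v^-n] so that its zeros are the roots
   of the quadratic [fpot_quad]. *)
Definition fpot_quad (n : nat) (a b H w : R) : R :=
  a + b * H ^ 2 + b * H * (2 - INR n) * w + b * (1 - INR n) * w ^ 2.

Definition fpot' (n : nat) (a b d H v : R) : R := -2 * d * v * fpot_quad n a b H (/ v ^ n).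

Definition fpot'' (n : nat) (a b d H v : R) : R :=
  -2 * d * (a + b * H ^ 2 + b * H * (2 - INR n) * (1 - INR n) * / v ^ n
            + b * (1 - INR n) * (1 - 2 * INR n) * (/ v ^ n) ^ 2).

Section Potential.
Variables (n : nat) (a b d C H : R).
Hypothesis n_ge_2 : (2 <= n)%nat.
Hypothesis b_sign : b = 1 \/ b = -1.
Hypothesis d_sign : d = 1 \/ d = -1.

Lemma fpot_is_derive v : 0 < v -> is_derive (fpot n a b d C H) v (fpot' n a b d H v).
Proof.
  intros Hv. unfold fpot, fpot', fpot_quad.
  assert (v ^ n <> 0) by (apply pow_nonzero; lra). auto_derive; [tauto |].
  destruct n as [| m]; [lia |]. simpl Init.Nat.pred. rewrite S_INR.
  assert (v ^ m <> 0) by (apply pow_nonzero; lra).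
  change (v ^ S m) with (v * v ^ m) in *. field. split; lra.
Qed.

Lemma fpot'_is_derive v : 0 < v -> is_derive (fpot' n a b d H) v (fpot'' n a b d H v).
Proof.
  intros Hv. unfold fpot', fpot'', fpot_quad.
  assert (v ^ n <> 0) by (apply pow_nonzero; lra). auto_derive; [tauto |].
  destruct n as [| m]; [lia |]. simpl Init.Nat.pred. rewrite S_INR.
  assert (v ^ m <> 0) by (apply pow_nonzero; lra).
  change (v ^ S m) with (v * v ^ m) in *. field. split; lra.
Qed.

Lemma fpot_force_eq v : 0 < v -> / 2 * Derive (fpot n a b d C H) v = / 2 * fpot' n a b d H v.
Proof. intros Hv. f_equal. apply is_derive_unique, fpot_is_derive, Hv. Qed.

Lemma fpot_is_derive_force v : 0 < v ->
  is_derive (fpot n a b d C H) v (2 * (/ 2 * Derive (fpot n a b d C H) v)).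
Proof.
  intros Hv. rewrite fpot_force_eq by exact Hv.
  replace (2 * (/ 2 * fpot' n a b d H v)) with (fpot' n a b d H v) by field.
  now apply fpot_is_derive.
Qed.

Lemma fpot_force_lipschitz : locally_lipschitz_pos (fun v => / 2 * Derive (fpot n a b d C H) v).
Proof.
  apply (locally_lipschitz_pos_ext (fun v => / 2 * fpot' n a b d H v)).
  { intros v Hv. symmetry. now apply fpot_force_eq. }
  apply (locally_lipschitz_pos_C1 _ (fun v => / 2 * fpot'' n a b d H v)).
  - intros v Hv. now apply is_derive_scal, fpot'_is_derive.
  - intros v Hv. apply continuity_pt_filterlim.
    apply (ex_derive_continuous (fun v => / 2 * fpot'' n a b d H v)). unfold fpot''.
    assert (v ^ n <> 0) by (apply pow_nonzero; lra). auto_derive. tauto.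
Qed.

Lemma fpot_force_no_three_zeros u c w : 0 < u -> u < c -> c < w ->
  / 2 * Derive (fpot n a b d C H) u = 0 -> / 2 * Derive (fpot n a b d C H) c = 0 ->
  / 2 * Derive (fpot n a b d C H) w = 0 -> False.
Proof.
  assert (Hquad : forall v, 0 < v -> / 2 * Derive (fpot n a b d C H) v = 0 ->
    fpot_quad n a b H (/ v ^ n) = 0).
  { intros v Hv Hz. rewrite fpot_force_eq in Hz by exact Hv. unfold fpot' in Hz.
    assert (Hdv : - d * v <> 0) by (apply Rmult_integral_contrapositive; split; lra).
    apply (Rmult_eq_reg_l (- d * v)); [lra | exact Hdv]. }
  assert (Hanti : forall s t, 0 < s -> s < t -> / t ^ n < / s ^ n).
  { intros s t Hs Hst. apply Rinv_lt_contravar.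
    - apply Rmult_lt_0_compat; apply pow_lt; lra.
    - apply pow_lt_pow_l; [lra | lia]. }
  intros Hu Huc Hcw Zu Zc Zw.
  apply (quadratic_no_three_roots (a + b * H ^ 2) (b * H * (2 - INR n)) (b * (1 - INR n))
    (/ w ^ n) (/ c ^ n) (/ u ^ n)).
  - assert (1 < INR n) by (apply lt_1_INR; lia). apply Rmult_integral_contrapositive. split; lra.
  - apply Hanti; lra.
  - apply Hanti; lra.
  - apply Hquad; [lra | exact Zw].
  - apply Hquad; [lra | exact Zc].
  - apply Hquad; [lra | exact Zu].
Qed.

Lemma small_v_large_term K : exists eps, 0 < eps /\
  forall v, 0 < v < eps -> v ^ 2 <= 1 /\ K < v * H + v * / v ^ n.
Proof.
  set (M := Rabs K + Rabs H + 1).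
  assert (HM : 1 <= M) by (unfold M; pose proof (Rabs_pos K); pose proof (Rabs_pos H); lra).
  exists (Rmin 1 (/ M)). split; [apply Rmin_glb_lt; [lra | apply Rinv_0_lt_compat; lra] |].
  intros v [Hv Hveps]. pose proof (Rmin_l 1 (/ M)). pose proof (Rmin_r 1 (/ M)).
  split; [nra |].
  assert (Hinv : M < / v).
  { apply (Rmult_lt_reg_l v); [lra |]. rewrite Rinv_r by lra.
    apply Rlt_le_trans with (/ M * M); [nra | rewrite Rinv_l; lra]. }
  assert (Hpow : / v <= v * / v ^ n).
  { destruct n as [| [| m]]; [lia | lia |].
    assert (Hvm : v ^ m <= 1) by (rewrite <- (pow1 m); apply pow_incr; lra).
    pose proof (pow_lt v m Hv).
    change (v ^ S (S m)) with (v * (v * v ^ m)).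
    replace (v * / (v * (v * v ^ m))) with (/ (v * v ^ m)) by (field; lra).
    apply Rinv_le_contravar; nra. }
  assert (HvH : - Rabs H <= v * H).
  { pose proof (Rabs_pos H). destruct (Rle_or_lt 0 H).
    - nra.
    - rewrite Rabs_left by lra. nra. }
  pose proof (Rle_abs K). unfold M in Hinv. lra.
Qed.

(* With [z = v (H + v^-n)] large near [0], [fpot v = C - d a v^2 - d b z^2] has the sign
   of [- d b]. *)
Lemma fpot_near_0 : exists eps, 0 < eps /\
  ((forall v, 0 < v < eps -> fpot n a b d C H v < 0) \/
   (exists m, 0 < m /\ forall v, 0 < v < eps -> m <= fpot n a b d C H v)).
Proof.
  set (K := Rabs C + Rabs a + 2).
  destruct (small_v_large_term K) as [eps [Heps Hsmall]]. exists eps. split; [exact Heps |].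
  assert (Hform : forall v, fpot n a b d C H v
    = (C - d * a * v ^ 2) - d * b * (v * H + v * / v ^ n) ^ 2) by (intros v; unfold fpot; ring).
  assert (Hbound : forall v, 0 < v < eps -> Rabs (C - d * a * v ^ 2) <= K - 2).
  { intros v Hv. destruct (Hsmall v Hv) as [Hv2 _].
    pose proof (Rabs_triang C (- (d * a * v ^ 2))) as Htri.
    rewrite Rabs_Ropp, !Rabs_mult, (Rabs_right (v ^ 2)) in Htri by (apply Rle_ge, pow2_ge_0).
    assert (Hd : Rabs d = 1) by (destruct d_sign as [-> | ->]; [apply Rabs_R1 | apply Rabs_m1]).
    rewrite Hd in Htri. unfold Rminus. pose proof (Rabs_pos a). unfold K. nra. }
  assert (Hsq : forall v, 0 < v < eps -> K + 2 <= (v * H + v * / v ^ n) ^ 2).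
  { intros v Hv. destruct (Hsmall v Hv) as [_ Hz].
    assert (2 <= K) by (unfold K; pose proof (Rabs_pos C); pose proof (Rabs_pos a); lra). nra. }
  assert (Hdb : d * b = 1 \/ d * b = -1)
    by (destruct d_sign as [-> | ->]; destruct b_sign as [-> | ->]; lra).
  destruct Hdb as [Hdb | Hdb]; [left | right; exists 1; split; [lra |]]; intros v Hv;
    rewrite Hform, Hdb; specialize (Hbound v Hv); specialize (Hsq v Hv);
    apply Rabs_le_between in Hbound; lra.
Qed.
End Potential.

Theorem mainTheorem8 (n : nat) (a b d C H : R) (g : R -> R)
  (hn : (2 <= n)%nat)
  (ha : a = -1 \/ a = 0 \/ a = 1)
  (hb : b = 1 \/ b = -1)
  (hd : d = 1 \/ d = -1)
  (hpos : forall x, 0 < g x)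
  (hsmooth : smooth g)
  (hnc : exists x y, g x <> g y)
  (hODE1 : forall x, (Derive g x) ^ 2 = fpot n a b d C H (g x))
  (hODE2 : forall x, Derive_n g 2 x = / 2 * Derive (fpot n a b d C H) (g x)) :
  type1 g \/ type2 g \/ type3 g \/ type4 g \/ type5 g.
Proof.
  apply (solution_classification (fpot n a b d C H) (fun v => / 2 * Derive (fpot n a b d C H) v))
    with (p := Derive g); [| | | | | exact hODE1 | exact hnc].
  - now apply fpot_force_lipschitz.
  - now apply fpot_is_derive_force.
  - now apply fpot_near_0.
  - intros u c w. now apply fpot_force_no_three_zeros.
  - split; [exact hpos | split; intros x].
    + exact (Derive_correct _ _ (hsmooth 1%nat x)).
    + rewrite <- hODE2. exact (Derive_correct _ _ (hsmooth 2%nat x)).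
Qed.
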